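(* Let $\alpha:U\to V$ be a transmission between supertropical monoids which is injective on the set $eU\setminus\{0\}$. (i) If $\alpha$ has trivial ghost kernel (i.e. $\mathfrak A_\alpha=eU$) and $V$ is a semiring, then $U$ is a semiring. (ii) If $\alpha$ is surjective and $U$ is a semiring, then $V$ is a semiring.
   Context: A bipotent semiring is a commutative monoid $(M,\cdot)$ with absorbing element $0$, equipped with a total order compatible with multiplication in which $0$ is least; addition is $\max$. A supertropical monoid is a monoid $(U,\cdot)$ with absorbing element $0$ and a distinguished central idempotent $e$ with $ex=0\Rightarrow x=0$, together with a total ordering on $M:=eU$ compatible with multiplication making $M$ a bipotent semiring. Define on $U$: $x+y:=y$ if $ex<ey$, $x$ if $ex>ey$, $ex$ if $ex=ey$; $U$ ''is a semiring'' if this addition is associative and multiplication distributes over it from both sides. A transmission $\alpha:U\to V$ between supertropical monoids is a map with $\alpha(0)=0$, $\alpha(1)=1$, $\alpha(xy)=\alpha(x)\alpha(y)$, $\alpha(e_U)=e_V$, and $x\le y\Rightarrow\alpha(x)\le\alpha(y)$ for $x,y\in eU$. Its ghost kernel is $\mathfrak A_\alpha:=\{x\in U:\alpha(x)\in eV\}$. *)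

From Stdlib Require Import Bool.


(* A supertropical monoid: a monoid (U,*,1) with absorbing 0, a distinguished
   central idempotent e with e x = 0 -> x = 0, and a (boolean, hence decidable)
   total order on M := eU compatible with multiplication, with 0 least, making
   M a bipotent semiring (in particular M is commutative).
   Membership in M = eU is expressed as  e * x = x. The order relation [st_le]
   is only constrained (and only ever used) on elements of M. *)
Record STMonoid := {
  st_car :> Type;
  st_mul : st_car -> st_car -> st_car;
  st_one : st_car;
  st_zero : st_car;
  st_e : st_car;
  st_le : st_car -> st_car -> bool;
  st_mulA : forall x y z, st_mul x (st_mul y z) = st_mul (st_mul x y) z;
  st_mul1l : forall x, st_mul st_one x = x;
  st_mul1r : forall x, st_mul x st_one = x;
  st_mul0l : forall x, st_mul st_zero x = st_zero;
  st_mul0r : forall x, st_mul x st_zero = st_zero;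
  st_e_idem : st_mul st_e st_e = st_e;
  st_e_central : forall x, st_mul st_e x = st_mul x st_e;
  st_e_faithful : forall x, st_mul st_e x = st_zero -> x = st_zero;
  st_M_comm : forall x y, st_mul st_e x = x -> st_mul st_e y = y ->
                st_mul x y = st_mul y x;
  st_le_refl : forall x, st_mul st_e x = x -> st_le x x = true;
  st_le_antisym : forall x y, st_mul st_e x = x -> st_mul st_e y = y ->
                st_le x y = true -> st_le y x = true -> x = y;
  st_le_trans : forall x y z, st_mul st_e x = x -> st_mul st_e y = y ->
                st_mul st_e z = z ->
                st_le x y = true -> st_le y z = true -> st_le x z = true;
  st_le_total : forall x y, st_mul st_e x = x -> st_mul st_e y = y ->
                st_le x y = true \/ st_le y x = true;
  st_le_mul : forall x y z, st_mul st_e x = x -> st_mul st_e y = y ->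
                st_mul st_e z = z ->
                st_le x y = true -> st_le (st_mul x z) (st_mul y z) = true;
  st_le0 : forall x, st_mul st_e x = x -> st_le st_zero x = true
}.

Section Ops.
Variable U : STMonoid.

Definition inM (x : U) : Prop := st_mul U (st_e U) x = x.

Definition st_lt (x y : U) : bool := st_le U x y && negb (st_le U y x).

Definition st_add (x y : U) : U :=
  let ex := st_mul U (st_e U) x in
  let ey := st_mul U (st_e U) y in
  if st_lt ex ey then y else if st_lt ey ex then x else ex.

Definition is_semiring : Prop :=
  (forall x y z : U, st_add x (st_add y z) = st_add (st_add x y) z) /\
  (forall x y z : U, st_mul U x (st_add y z) = st_add (st_mul U x y) (st_mul U x z)) /\
  (forall x y z : U, st_mul U (st_add x y) z = st_add (st_mul U x z) (st_mul U y z)).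
End Ops.

Definition is_transmission (U V : STMonoid) (a : U -> V) : Prop :=
  a (st_zero U) = st_zero V /\
  a (st_one U) = st_one V /\
  (forall x y : U, a (st_mul U x y) = st_mul V (a x) (a y)) /\
  a (st_e U) = st_e V /\
  (forall x y : U, inM U x -> inM U y -> st_le U x y = true -> st_le V (a x) (a y) = true).

Definition ghost_kernel (U V : STMonoid) (a : U -> V) : U -> Prop :=
  fun x => inM V (a x).

Definition trivial_ghost_kernel (U V : STMonoid) (a : U -> V) : Prop :=
  forall x : U, ghost_kernel U V a x <-> inM U x.

Definition inj_on_eU_nonzero (U V : STMonoid) (a : U -> V) : Prop :=
  forall x y : U, inM U x -> inM U y -> x <> st_zero U -> y <> st_zero U ->
    a x = a y -> x = y.

(* U is a semiring iff, for each fixed x, left and right multiplication by x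
   are additive; since y + z is y, z or e y according to the order of the
   ghosts e y, e z, additivity of such a map f can only fail when e y < e z
   and f y, f z have the same ghost, and then it says exactly that f z is
   itself a ghost ("ghost cancellation").  A transmission that is injective on
   nonzero ghosts reflects strict inequalities of ghosts (up to the value 0)
   and is reflected by them, so ghost cancellation transfers from V to U when
   only ghosts are mapped to ghosts, and from U to V when alpha is onto. *)

From Stdlib Require Import Bool Classical.

Section GhostAddition.
Variable U : STMonoid.
Local Notation m := (st_mul U).
Local Notation e := (st_e U).
Local Notation le := (st_le U).
Local Notation lt := (st_lt U).
Local Notation add := (st_add U).

Lemma inM_e x : inM U (m e x).
Proof. unfold inM; rewrite st_mulA, st_e_idem; reflexivity. Qed.

Lemma inM_zero : inM U (st_zero U).
Proof. apply st_mul0r. Qed.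

Lemma mul_e_r x : m x e = m e x.
Proof. symmetry; apply st_e_central. Qed.

Lemma e_mul x y : m e (m x y) = m (m e x) (m e y).
Proof.
  assert (Hxe : m (m e x) e = m e x).
  { rewrite mul_e_r, st_mulA, st_e_idem; reflexivity. }
  rewrite (st_mulA U (m e x) e y), Hxe, st_mulA; reflexivity.
Qed.

Lemma mul_e_l x y : m x (m e y) = m e (m x y).
Proof. rewrite st_mulA, mul_e_r, st_mulA; reflexivity. Qed.

Lemma lt_irr x : lt x x = false.
Proof. unfold st_lt; destruct (le x x); reflexivity. Qed.

Lemma ltW x y : lt x y = true -> le x y = true.
Proof. unfold st_lt; intro H; apply andb_true_iff in H; tauto. Qed.

Lemma le_ltF x y : le x y = true -> lt y x = false.
Proof. unfold st_lt; intro H; rewrite H; destruct (le y x); reflexivity. Qed.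

Lemma lt_trans x y z : inM U x -> inM U y -> inM U z ->
  lt x y = true -> lt y z = true -> lt x z = true.
Proof.
  unfold st_lt; intros Hx Hy Hz Hxy Hyz.
  apply andb_true_iff in Hxy as [Hxy Hyx]; apply andb_true_iff in Hyz as [Hyz Hzy].
  apply negb_true_iff in Hyx; apply negb_true_iff in Hzy.
  rewrite (st_le_trans U x y z Hx Hy Hz Hxy Hyz); simpl.
  destruct (le z x) eqn:Hzx; [|reflexivity].
  rewrite (st_le_trans U y z x Hy Hz Hx Hyz Hzx) in Hyx; discriminate.
Qed.

Lemma lt_trichotomy x y : inM U x -> inM U y ->
  (lt x y = true /\ lt y x = false) \/ x = y \/ (lt x y = false /\ lt y x = true).
Proof.
  intros Hx Hy; unfold st_lt.
  destruct (le x y) eqn:Hxy, (le y x) eqn:Hyx; simpl; auto.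
  - right; left; apply st_le_antisym; auto.
  - destruct (st_le_total U x y Hx Hy); congruence.
Qed.

Lemma le_mul_l x y z : le (m e y) (m e z) = true ->
  le (m e (m x y)) (m e (m x z)) = true.
Proof.
  intro H; rewrite !e_mul.
  rewrite (st_M_comm U (m e x) (m e y)), (st_M_comm U (m e x) (m e z))
    by apply inM_e.
  apply st_le_mul; auto; apply inM_e.
Qed.

Lemma le_mul_r x y z : le (m e y) (m e z) = true ->
  le (m e (m y x)) (m e (m z x)) = true.
Proof. intro H; rewrite !e_mul; apply st_le_mul; auto; apply inM_e. Qed.

Lemma add_lt x y : lt (m e x) (m e y) = true -> add x y = y.
Proof. intro H; unfold st_add; cbv zeta; rewrite H; reflexivity. Qed.

Lemma add_gt x y : lt (m e y) (m e x) = true -> add x y = x.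
Proof.
  intro H; unfold st_add; cbv zeta; rewrite H.
  rewrite (le_ltF _ _ (ltW _ _ H)); reflexivity.
Qed.

Lemma add_eq x y : m e x = m e y -> add x y = m e x.
Proof. intro H; unfold st_add; cbv zeta; rewrite H, lt_irr; reflexivity. Qed.

Lemma add_comm x y : add x y = add y x.
Proof.
  destruct (lt_trichotomy _ _ (inM_e x) (inM_e y)) as [[H _]|[H|[_ H]]].
  - rewrite (add_lt _ _ H), (add_gt _ _ H); reflexivity.
  - rewrite (add_eq _ _ H), (add_eq _ _ (eq_sym H)), H; reflexivity.
  - rewrite (add_gt _ _ H), (add_lt _ _ H); reflexivity.
Qed.

Ltac refute_order :=
  match goal with
  | H : lt ?x ?x = true |- _ => rewrite lt_irr in H; discriminate
  | H1 : lt ?x ?y = true, H2 : lt ?y ?x = true |- _ =>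
      rewrite (le_ltF _ _ (ltW _ _ H1)) in H2; discriminate
  | H1 : lt ?x ?y = true, H2 : lt ?y ?z = true, H3 : lt ?x ?z = false |- _ =>
      rewrite (lt_trans x y z (inM_e _) (inM_e _) (inM_e _) H1 H2) in H3; discriminate
  | H1 : lt ?x ?y = true, H2 : lt ?y ?z = true, H3 : lt ?z ?x = true |- _ =>
      rewrite (lt_trans x y z (inM_e _) (inM_e _) (inM_e _) H1 H2) in H3; discriminate
  end.

Lemma add_assoc x y z : add x (add y z) = add (add x y) z.
Proof.
  destruct (lt_trichotomy _ _ (inM_e x) (inM_e y)) as [[A1 A2]|[A|[A1 A2]]];
  destruct (lt_trichotomy _ _ (inM_e y) (inM_e z)) as [[B1 B2]|[B|[B1 B2]]];
  destruct (lt_trichotomy _ _ (inM_e x) (inM_e z)) as [[C1 C2]|[C|[C1 C2]]];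
  unfold st_add; cbv zeta;
  repeat first [ rewrite A1 | rewrite A2 | rewrite B1 | rewrite B2
               | rewrite C1 | rewrite C2
               | rewrite A in * | rewrite B in * | rewrite C in *
               | rewrite (inM_e _) | rewrite lt_irr | progress cbv iota ];
  try reflexivity; try refute_order.
Qed.

Definition ghost_cancellative (f : U -> U) : Prop :=
  forall y z, lt (m e y) (m e z) = true -> m e (f y) = m e (f z) -> inM U (f z).

Section AdditiveMaps.
Variable f : U -> U.
Hypothesis f_e : forall y, f (m e y) = m e (f y).
Hypothesis f_mono : forall y z, le (m e y) (m e z) = true ->
  le (m e (f y)) (m e (f z)) = true.

Lemma additive_lt y z : ghost_cancellative f ->
  lt (m e y) (m e z) = true -> f (add y z) = add (f y) (f z).
Proof.
  intros Hgc Hyz; rewrite (add_lt _ _ Hyz).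
  destruct (lt_trichotomy _ _ (inM_e (f y)) (inM_e (f z)))
    as [[Hlt _]|[Heq|[_ Hgt]]].
  - rewrite (add_lt _ _ Hlt); reflexivity.
  - rewrite (add_eq _ _ Heq), Heq; symmetry; exact (Hgc y z Hyz Heq).
  - rewrite (le_ltF _ _ (f_mono y z (ltW _ _ Hyz))) in Hgt; discriminate.
Qed.

Lemma additive_iff_ghost_cancellative :
  (forall y z, f (add y z) = add (f y) (f z)) <-> ghost_cancellative f.
Proof.
  split.
  - intros Hadd y z Hyz Heq.
    specialize (Hadd y z); rewrite (add_lt _ _ Hyz), (add_eq _ _ Heq) in Hadd.
    rewrite Hadd; apply inM_e.
  - intros Hgc y z.
    destruct (lt_trichotomy _ _ (inM_e y) (inM_e z)) as [[Hlt _]|[Heq|[_ Hgt]]].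
    + exact (additive_lt y z Hgc Hlt).
    + assert (Hf : m e (f y) = m e (f z)) by (rewrite <- !f_e, Heq; reflexivity).
      rewrite (add_eq _ _ Heq), (add_eq _ _ Hf), f_e; reflexivity.
    + rewrite add_comm, (add_comm (f y)); exact (additive_lt z y Hgc Hgt).
Qed.

End AdditiveMaps.

Lemma semiring_iff_ghost_cancellative : is_semiring U <->
  (forall x, ghost_cancellative (m x)) /\
  (forall x, ghost_cancellative (fun y => m y x)).
Proof.
  pose proof (fun x => additive_iff_ghost_cancellative (m x)
                 (mul_e_l x) (le_mul_l x)) as Hl.
  pose proof (fun x => additive_iff_ghost_cancellative (fun y => m y x)
                 (fun y => eq_sym (st_mulA U e y x)) (le_mul_r x)) as Hr.
  split.
  - intros [_ [Hdl Hdr]]; split; intro x.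
    + apply Hl; intros y z; apply Hdl.
    + apply Hr; intros y z; apply Hdr.
  - intros [Hgl Hgr]; split; [exact add_assoc|split]; intros x y z.
    + exact (proj2 (Hl x) (Hgl x) y z).
    + exact (proj2 (Hr z) (Hgr z) x y).
Qed.

End GhostAddition.

Section Transmission.
Variables U V : STMonoid.
Variable a : U -> V.
Hypothesis Ha : is_transmission U V a.
Hypothesis Hinj : inj_on_eU_nonzero U V a.
Local Notation mU := (st_mul U).
Local Notation mV := (st_mul V).
Local Notation eU := (st_e U).
Local Notation eV := (st_e V).

Lemma tr_zero : a (st_zero U) = st_zero V.
Proof. apply Ha. Qed.

Lemma tr_mul x y : a (mU x y) = mV (a x) (a y).
Proof. apply Ha. Qed.

Lemma tr_e x : a (mU eU x) = mV eV (a x).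
Proof. destruct Ha as [_ [_ [Hmul [He _]]]]; rewrite Hmul, He; reflexivity. Qed.

Lemma tr_le x y : inM U x -> inM U y -> st_le U x y = true ->
  st_le V (a x) (a y) = true.
Proof. apply Ha. Qed.

Lemma tr_lt_reflect y z :
  st_lt V (mV eV (a y)) (mV eV (a z)) = true ->
  st_lt U (mU eU y) (mU eU z) = true.
Proof.
  rewrite <- !tr_e; intro H.
  destruct (lt_trichotomy U _ _ (inM_e U y) (inM_e U z)) as [[Hlt _]|[Heq|[_ Hgt]]].
  - exact Hlt.
  - rewrite Heq, lt_irr in H; discriminate.
  - rewrite (le_ltF V _ _ (tr_le _ _ (inM_e U _) (inM_e U _) (ltW U _ _ Hgt))) in H.
    discriminate.
Qed.

(* Ghosts with equal images are equal unless the smaller one is 0, and then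
   the larger one has image 0 as well. *)
Lemma tr_lt y z : st_lt U (mU eU y) (mU eU z) = true ->
  a z = st_zero V \/ st_lt V (mV eV (a y)) (mV eV (a z)) = true.
Proof.
  intro Hyz.
  assert (Hle := tr_le _ _ (inM_e U y) (inM_e U z) (ltW U _ _ Hyz)).
  rewrite !tr_e in Hle.
  unfold st_lt; rewrite Hle; simpl.
  destruct (st_le V (mV eV (a z)) (mV eV (a y))) eqn:Hzy; [left|right; reflexivity].
  assert (Heq := st_le_antisym V _ _ (inM_e V _) (inM_e V _) Hle Hzy).
  rewrite <- !tr_e in Heq.
  destruct (classic (mU eU y = st_zero U)) as [Hy0|Hy0].
  - rewrite Hy0, tr_zero in Heq.
    apply st_e_faithful; rewrite <- tr_e, <- Heq; reflexivity.
  - assert (Hz0 : mU eU z <> st_zero U).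
    { intro Hz0; apply Hy0, st_le_antisym;
        [apply inM_e | apply inM_zero | rewrite <- Hz0; apply (ltW U), Hyz
        | apply st_le0, inM_e]. }
    rewrite (Hinj _ _ (inM_e U _) (inM_e U _) Hy0 Hz0 Heq), lt_irr in Hyz.
    discriminate.
Qed.

Section Intertwined.
Variable f : U -> U.
Variable g : V -> V.
Hypothesis a_f : forall y, a (f y) = g (a y).

Lemma ghost_cancellative_pullback : trivial_ghost_kernel U V a ->
  g (st_zero V) = st_zero V -> ghost_cancellative V g -> ghost_cancellative U f.
Proof.
  intros Hker Hg0 Hgc y z Hyz Hf.
  apply Hker; unfold ghost_kernel; rewrite a_f.
  destruct (tr_lt y z Hyz) as [Hz0|Hlt].
  - rewrite Hz0, Hg0; apply inM_zero.
  - apply (Hgc (a y) (a z) Hlt).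
    rewrite <- !a_f, <- !tr_e, Hf; reflexivity.
Qed.

Lemma ghost_cancellative_pushforward : (forall v : V, exists u : U, a u = v) ->
  ghost_cancellative U f -> ghost_cancellative V g.
Proof.
  intros Hsurj Hgc v w Hvw Hg.
  destruct (Hsurj v) as [y <-], (Hsurj w) as [z <-].
  destruct (classic (mV eV (g (a z)) = st_zero V)) as [Hz0|Hz0].
  - rewrite (st_e_faithful V _ Hz0); apply inM_zero.
  - rewrite <- !a_f, <- !tr_e in Hg; rewrite <- a_f, <- tr_e in Hz0.
    assert (Hfz : mU eU (f z) <> st_zero U)
      by (intro H; apply Hz0; rewrite H; apply tr_zero).
    assert (Hfy : mU eU (f y) <> st_zero U)
      by (intro H; apply Hz0; rewrite <- Hg, H; apply tr_zero).
    assert (Heq := Hinj _ _ (inM_e U _) (inM_e U _) Hfy Hfz Hg).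
    unfold inM; rewrite <- a_f, <- tr_e, (Hgc y z (tr_lt_reflect y z Hvw) Heq).
    reflexivity.
Qed.

End Intertwined.
End Transmission.

Theorem theorem1p5 (U V : STMonoid) (a : U -> V) :
  is_transmission U V a -> inj_on_eU_nonzero U V a ->
  ((trivial_ghost_kernel U V a -> is_semiring V -> is_semiring U) /\
   ((forall v : V, exists u : U, a u = v) -> is_semiring U -> is_semiring V)).
Proof.
  intros Ha Hinj; split.
  - intros Hker HV.
    apply semiring_iff_ghost_cancellative in HV as [Hl Hr].
    apply semiring_iff_ghost_cancellative; split; intro x.
    + apply (ghost_cancellative_pullback U V a Ha Hinj _ (st_mul V (a x)));
        [apply (tr_mul U V a Ha) | exact Hker | apply st_mul0r | apply Hl].
    + apply (ghost_cancellative_pullback U V a Ha Hinj _ (fun v => st_mul V v (a x)));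
        [intro; apply (tr_mul U V a Ha) | exact Hker | apply st_mul0l | apply Hr].
  - intros Hsurj HU.
    apply semiring_iff_ghost_cancellative in HU as [Hl Hr].
    apply semiring_iff_ghost_cancellative; split; intro v;
      destruct (Hsurj v) as [x <-].
    + apply (ghost_cancellative_pushforward U V a Ha Hinj (st_mul U x));
        [apply (tr_mul U V a Ha) | exact Hsurj | apply Hl].
    + apply (ghost_cancellative_pushforward U V a Ha Hinj (fun y => st_mul U y x));
        [intro; apply (tr_mul U V a Ha) | exact Hsurj | apply Hr].
Qed.
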